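(* Let $n\ge 1$. For any code $C_n\in\mathbb{S}_n$ with codeword lengths $l_1,\dots,l_n$, there exist an integer $m\le\sum_{i=1}^n(l_i-1)$ (in particular $m=O(n^2)$) and symmetric fix-free codes $S_n^{(1)},\dots,S_n^{(m)}\in\mathbb{S}_n$ such that $R_n=S_n^{(0)}\rightarrow S_n^{(1)}\rightarrow\cdots\rightarrow S_n^{(m)}=C_n$, and such that for each $i\in\{0,1,\dots,m-1\}$ every codeword of $C_n$ has a prefix in $S_n^{(i)}$. Furthermore, there exist codes $B_n\in\mathbb{S}_n$ for which any such sequence from $R_n$ to $B_n$ requires $m=\Omega(n^{1.5})$ codes.
   Context: All strings are finite binary strings; $|w|$ denotes length. A palindrome is a string equal to its reversal. A symmetric fix-free code is a finite set of binary palindromes no one of which is a proper prefix of another. $\mathbb{S}_n$ is the set of symmetric fix-free codes with exactly $n$ codewords which do not contain the string $1$ and all of whose codewords have length at most $n$. $R_n=\{s_1,\dots,s_n\}$ with $s_1=0$ and $s_i=1\,0^{i-2}\,1$ for $2\le i\le n$ (so $|s_i|=i$). For a palindrome $\sigma$, $\mathcal{N}(\sigma)$ is the set of palindromes $w$ such that $\sigma$ is the longest palindrome that is a proper prefix of $w$, and $\mathcal{N}_n(\sigma)=\{w\in\mathcal{N}(\sigma):|w|\le n\}$. For $S,\hat S\in\mathbb{S}_n$, write $S\rightarrow\hat S$ if there is $\sigma\in S$ with $\hat S\subseteq (S\cup\mathcal{N}_n(\sigma))\setminus\{\sigma\}$. ''Prefix'' includes equality. *)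

From HB Require Import structures.
From mathcomp Require Import all_boot finmap.
Set Implicit Arguments. Unset Strict Implicit. Unset Printing Implicit Defensive.
Local Open Scope fset_scope.

(* Binary strings: bitseq = seq bool, with 0 = false and 1 = true. *)

Definition palindrome (w : bitseq) : bool := rev w == w.

Definition pprefix (u w : bitseq) : bool := prefix u w && (u != w).

Definition sym_fixfree (S : {fset bitseq}) : Prop :=
  (forall w, w \in S -> palindrome w /\ w != [::]) /\
  (forall u v, u \in S -> v \in S -> ~~ pprefix u v).

Definition inSS (n : nat) (S : {fset bitseq}) : Prop :=
  [/\ sym_fixfree S, #|` S| = n, [:: true] \notin S &
      forall w, w \in S -> size w <= n].

Definition s_word (i : nat) : bitseq :=
  if i == 1 then [:: false] else true :: rcons (nseq (i - 2) false) true.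

Definition R_code (n : nat) : {fset bitseq} := [fset s_word i | i in iota 1 n].

Definition inN (sigma w : bitseq) : Prop :=
  [/\ palindrome w, palindrome sigma, pprefix sigma w &
      forall u, palindrome u -> pprefix u w -> size u <= size sigma].

Definition inNn (n : nat) (sigma w : bitseq) : Prop := inN sigma w /\ size w <= n.

Definition step (n : nat) (S S' : {fset bitseq}) : Prop :=
  exists2 sigma, sigma \in S &
    forall w, w \in S' -> (w \in S \/ inNn n sigma w) /\ w != sigma.

Definition good_seq (n : nat) (C : {fset bitseq}) (m : nat)
    (S : nat -> {fset bitseq}) : Prop :=
  [/\ S 0 = R_code n, S m = C,
      (forall i, 1 <= i <= m -> inSS n (S i)),
      (forall i, i < m -> step n (S i) (S i.+1)) &
      (forall i, i < m -> forall c, c \in C -> exists2 p, p \in S i & prefix p c)].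

Definition sum_len_minus1 (C : {fset bitseq}) : nat :=
  \sum_(w <- enum_fset C) (size w - 1).

(* Upper bound: while the current code S differs from C, some sig in S is a proper prefix of
   a codeword of C.  The next code keeps the elements of S other than sig that are prefixes of
   codewords, replaces sig by its children (for each codeword above sig, its shortest
   palindromic prefix longer than sig), and is padded back to n words with the remaining
   elements of S; these kept words form an antichain below the n codewords, so there are at
   most n of them.  All codewords stay covered while sig becomes uncovered, so the number of
   covered palindromic proper prefixes of codewords decreases at each move; it is at most
   sum (l_i - 1) at R_n because the empty prefix is never covered.

   Lower bound: a palindromic proper prefix of a codeword of B (other than 1) is covered by
   R_n and not by B, and a move through sig uncovers no such prefix except sig itself.  So m is
   at least the number of these prefixes, which is n (t - 1) = Omega(n^1.5) for the code of
   the words (1^k 0^j)^t 1^k with k, j about sqrt n and t = sqrt n / 4. *)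

From HB Require Import structures.
From mathcomp Require Import all_boot finmap zify.
From Stdlib Require PeanoNat.
Set Implicit Arguments. Unset Strict Implicit. Unset Printing Implicit Defensive.

Lemma prefix_size_eq (u w : bitseq) : prefix u w -> size u = size w -> u = w.
Proof. by rewrite prefixE => /eqP uE sz; rewrite -uE sz take_size. Qed.

Lemma pprefix_size (u w : bitseq) : pprefix u w -> size u < size w.
Proof.
case/andP=> uw; rewrite ltn_neqAle size_prefix // andbT.
by apply: contra => /eqP /(prefix_size_eq uw) ->.
Qed.

Lemma prefix_pprefix (u w : bitseq) : prefix u w -> size u < size w -> pprefix u w.
Proof. by move=> uw lt; rewrite /pprefix uw; apply: contraTneq lt => ->; rewrite ltnn. Qed.

Lemma prefix_shorter (u v w : bitseq) :
  prefix u w -> prefix v w -> size u <= size v -> prefix u v.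
Proof. by rewrite !prefixE => /eqP uE /eqP vE le; rewrite -vE take_takel // uE. Qed.

Lemma prefix_nth (u w : bitseq) k : prefix u w -> k < size u -> nth false u k = nth false w k.
Proof. by move=> /prefixP[r ->] lt; rewrite nth_cat lt. Qed.

Lemma nseq_or_first_true (q : bitseq) :
  q = nseq (size q) false \/ exists j r, q = nseq j false ++ true :: r.
Proof.
elim: q => [|[] q IH]; [by left | by right; exists 0, q |].
case: IH => [qE|[j [r qE]]]; first by left; rewrite /= -qE.
by right; exists j.+1, r; rewrite qE.
Qed.

Definition covered (S : {fset bitseq}) (p : bitseq) : bool :=
  has (fun s => prefix s p) (enum_fset S).

Lemma coveredP S p : reflect (exists2 s, s \in S & prefix s p) (covered S p).
Proof. exact: hasP. Qed.

Definition extends_to (C : {fset bitseq}) (w : bitseq) : bool := has (prefix w) (enum_fset C).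

Lemma extends_toP C w : reflect (exists2 c, c \in C & prefix w c) (extends_to C w).
Proof. exact: hasP. Qed.

Definition antichain (S : {fset bitseq}) : Prop :=
  forall u v, u \in S -> v \in S -> ~~ pprefix u v.

Lemma covered_nil S : sym_fixfree S -> ~~ covered S [::].
Proof.
case=> nonempty _; apply/coveredP => -[s sS]; rewrite prefixs0 => /eqP s0.
by have [_] := nonempty s sS; rewrite s0.
Qed.

Lemma antichain_sub A B : (A `<=` B)%fset -> antichain B -> antichain A.
Proof. by move=> /fsubsetP AB acB u v /AB uB /AB vB; exact: acB. Qed.

Lemma antichain_prefix_eq S u v : antichain S -> u \in S -> v \in S -> prefix u v -> u = v.
Proof.
move=> acS uS vS uv; apply/eqP; apply: contraNT (acS u v uS vS) => ne.
by rewrite /pprefix uv ne.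
Qed.

(* In an antichain, distinct elements extend to distinct codewords. *)
Lemma antichain_card (C X : {fset bitseq}) :
  antichain X -> (forall w, w \in X -> extends_to C w) -> #|` X| <= #|` C|.
Proof.
move=> acX ext.
pose g w := nth [::] (enum_fset C) (find (prefix w) (enum_fset C)).
have gP w : w \in X -> g w \in C /\ prefix w (g w).
  move=> /ext wC; split; first by apply: mem_nth; rewrite -has_find.
  exact: (nth_find [::] wC).
have g_inj : {in X &, injective g}.
  move=> u v uX vX guv; have [_ ug] := gP u uX; have [_ vg] := gP v vX.
  rewrite -guv in vg; case: (leqP (size u) (size v)) => [|/ltnW] le.
    exact: antichain_prefix_eq acX uX vX (prefix_shorter ug vg le).
  exact/esym/(antichain_prefix_eq acX vX uX (prefix_shorter vg ug le)).
rewrite -(eqP (introT (card_in_imfsetP g X) g_inj)); apply: fsubset_leq_card.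
by apply/fsubsetP => _ /imfsetP[w /= wX ->]; have [] := gP w wX.
Qed.

Lemma card_imfset_iota (T : choiceType) (f : nat -> T) a n :
  {in iota a n &, injective f} -> #|` [fset f i | i in iota a n]%fset| = n.
Proof.
move=> f_inj; rewrite card_in_imfset // -[RHS](size_iota a n).
by apply/perm_size/uniq_perm; [exact: enum_finmem_uniq | exact: iota_uniq | exact: enum_finmemE].
Qed.

Lemma mem_R n w : reflect (exists2 i, 0 < i <= n & w = s_word i) (w \in R_code n).
Proof.
apply: (iffP (imfsetP _ _ _ _)) => -[i iI ->]; exists i => //; rewrite ?mem_iota in iI *; lia.
Qed.

Lemma size_s_word i : 0 < i -> size (s_word i) = i.
Proof. by rewrite /s_word; case: eqP => [->//|] /= *; rewrite size_rcons size_nseq; lia. Qed.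

Lemma s_word_pal i : palindrome (s_word i).
Proof.
by rewrite /palindrome /s_word; case: (i == 1) => //; rewrite rev_cons rev_rcons rev_nseq.
Qed.

Lemma card_R n : #|` R_code n| = n.
Proof.
apply: card_imfset_iota => i j; rewrite !mem_iota => /andP[i0 _] /andP[j0 _] ij.
by rewrite -(size_s_word i0) -(size_s_word j0) ij.
Qed.

Lemma R_antichain n : antichain (R_code n).
Proof.
move=> _ _ /mem_R[i /andP[i0 _] ->] /mem_R[j /andP[j0 _] ->].
apply/negP=> ij; have := pprefix_size ij; rewrite !size_s_word // => lt_ij.
have := prefix_nth (k := i.-1) (proj1 (andP ij)); rewrite size_s_word // => /(_ ltac:(lia)).
(* position i-1 holds the last letter of s_i, a 1, but a 0 of the longer s_j *)
rewrite /s_word; case: eqP => [i1|i_ne1]; case: eqP => [j1|j_ne1]; try lia.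
  by rewrite i1; case: (j - 2).
have -> : i.-1 = (i - 2).+1 by lia.
rewrite /= !nth_rcons !size_nseq ltnn eqxx.
have -> : i - 2 < j - 2 by lia.
by rewrite nth_nseq; case: ifP.
Qed.

(* A palindrome other than 1 starts with 0 or with 1 0^j 1. *)
Lemma R_covers n p : palindrome p -> p != [::] -> p != [:: true] -> size p <= n ->
  covered (R_code n) p.
Proof.
case: p => [//|[] q] pal _ not1 /= szp; apply/coveredP; last first.
  by exists [:: false]; [apply/mem_R; exists 1 => //; lia | rewrite prefix_cons prefix0s].
case: (nseq_or_first_true q) => [qE|[j [r qE]]].
  move: pal not1; rewrite qE; case: (size q) => [|l]; first by rewrite eqxx.
  by rewrite /palindrome rev_cons rev_nseq.
exists (s_word j.+2).
  by apply/mem_R; exists j.+2 => //; move: szp; rewrite qE size_cat /= size_nseq; lia.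
rewrite /s_word /= -cats1 qE subn2 /=.
by rewrite prefix_catr // eqxx /= prefix0s.
Qed.

Lemma inSS_R n : inSS n (R_code n).
Proof.
split; last first.
- by move=> _ /mem_R[i /andP[i0 ?] ->]; rewrite size_s_word.
- apply/mem_R => -[i _]; rewrite /s_word; case: eqP => // _ [] /(congr1 size).
  by rewrite size_rcons.
- exact: card_R.
split; last exact: R_antichain.
move=> _ /mem_R[i /andP[i0 _] ->]; split; first exact: s_word_pal.
by rewrite -size_eq0 size_s_word // -lt0n.
Qed.

Lemma sub_in_count (T : eqType) (a1 a2 : pred T) (s : seq T) :
  (forall x, x \in s -> a1 x -> a2 x) -> count a1 s <= count a2 s.
Proof.
elim: s => //= x s IH sub; apply: leq_add.
  by case: (a1 x) (sub x) => // -> //; exact: mem_head.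
by apply: IH => y ys; apply: sub; rewrite inE ys orbT.
Qed.

Lemma good_seq_antichain n B m S i : good_seq n B m S -> i <= m -> antichain (S i).
Proof.
case=> S0 _ SS _ _; case: i => [|i] le; first by rewrite S0; exact: R_antichain.
by have [[_ acS] _ _ _] := SS i.+1 le.
Qed.

Lemma good_seq_covered n B m S i c :
  good_seq n B m S -> i <= m -> c \in B -> covered (S i) c.
Proof.
case=> _ Sm _ _ pre; rewrite leq_eqVlt => /orP[/eqP ->|lt_im] cB; apply/coveredP.
  by exists c; rewrite ?Sm ?prefix_refl.
exact: pre.
Qed.

(* The element of [S'] below [c] can only fail to cover [p] by being longer; it is then in
   N(sig), so [p] is a proper prefix of [sig], and so is the element of [S] covering [p]. *)
Lemma step_keeps_covered n S S' sig p c :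
  antichain S -> sig \in S ->
  (forall w, w \in S' -> (w \in S \/ inNn n sig w) /\ w != sig) ->
  palindrome p -> pprefix p c -> covered S' c -> covered S p -> p != sig -> covered S' p.
Proof.
move=> acS sigS stepS' pal_p pc /coveredP[s' s'S' s'c] /coveredP[s sS sp] p_sig.
have p_c := proj1 (andP pc).
case: (leqP (size s') (size p)) => [le|gt].
  by apply/coveredP; exists s' => //; apply: prefix_shorter s'c p_c le.
have ps' : prefix p s' by apply: prefix_shorter p_c s'c (ltnW gt).
have no_longer x : x \in S -> prefix p x -> size p < size x -> False.
  move=> xS px lt; have := acS s x sS xS; rewrite prefix_pprefix //.
    exact: prefix_trans sp px.
  exact: leq_ltn_trans (size_prefix sp) lt.
have [[s'S|[[_ _ sig_s' longest] _]] _] := stepS' s' s'S'; first by case: (no_longer s').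
have le := longest p pal_p (prefix_pprefix ps' gt).
have psig : prefix p sig := prefix_shorter ps' (proj1 (andP sig_s')) le.
case: (no_longer sig) => //; rewrite ltn_neqAle le andbT.
by apply: contra p_sig => /eqP/(prefix_size_eq psig) ->.
Qed.

Section LowerBound.

Variables (n m : nat) (B : {fset bitseq}) (S : nat -> {fset bitseq}) (U : seq bitseq).
Hypotheses (B_SS : inSS n B) (S_good : good_seq n B m S) (U_uniq : uniq U).
Hypothesis U_below : forall p, p \in U -> exists2 c, c \in B & pprefix p c.
Hypothesis U_pal : forall p, p \in U -> [/\ palindrome p, p != [::] & p != [:: true]].

Lemma count_covered_step i :
  i < m -> count (covered (S i)) U <= count (covered (S i.+1)) U + 1.
Proof.
move=> lt_im; have [_ _ _ steps _] := S_good; have [sig sigS stepS'] := steps i lt_im.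
apply: (@leq_trans (count (predU (covered (S i.+1)) (pred1 sig)) U)).
  apply: sub_in_count => p pU cov_p /=; case: (eqVneq p sig) => [|p_sig]; first by rewrite orbT.
  have [c cB pc] := U_below pU; have [pal_p _ _] := U_pal pU.
  have acS := good_seq_antichain S_good (ltnW lt_im).
  by rewrite (step_keeps_covered acS sigS stepS' pal_p pc (good_seq_covered S_good lt_im cB)).
apply: (@leq_trans (count (covered (S i.+1)) U + count (pred1 sig) U)).
  by rewrite -count_predUI leq_addr.
by rewrite leq_add2l count_uniq_mem // leq_b1.
Qed.

Lemma size_le_length : size U <= m.
Proof.
have [S0 Sm _ _ _] := S_good; have [[_ acB] _ _ szB] := B_SS.
have covered0 : count (covered (S 0)) U = size U.
  apply/eqP; rewrite -all_count; apply/allP => p pU; have [pal_p p0 p1] := U_pal pU.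
  have [c cB pc] := U_below pU; rewrite S0 R_covers //.
  exact: leq_trans (ltnW (pprefix_size pc)) (szB c cB).
have coveredm : count (covered (S m)) U = 0.
  apply/eqP; rewrite -leqn0 leqNgt -has_count; apply/hasP => -[p pU /coveredP[b bB bp]].
  have [c cB pc] := U_below pU; rewrite Sm in bB.
  have := acB b c bB cB; rewrite prefix_pprefix //.
    exact: prefix_trans bp (proj1 (andP pc)).
  exact: leq_ltn_trans (size_prefix bp) (pprefix_size pc).
have telescope i : i <= m -> size U <= count (covered (S i)) U + i.
  elim: i => [|i IH] le; first by rewrite covered0 addn0.
  have := count_covered_step le; have := IH (ltnW le); lia.
by have := telescope m (leqnn m); rewrite coveredm.
Qed.

End LowerBound.

Fixpoint stripes (k j t : nat) : bitseq :=
  if t is t'.+1 then nseq k true ++ nseq j false ++ stripes k j t' else nseq k true.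

Lemma size_stripes k j t : size (stripes k j t) = k + t * (j + k).
Proof. by elim: t => [|t IH] /=; rewrite ?size_cat ?size_nseq ?IH; lia. Qed.

Lemma stripes_rotate k j t :
  stripes k j t ++ nseq j false ++ nseq k true = nseq k true ++ nseq j false ++ stripes k j t.
Proof. by elim: t => [|t IH] //=; rewrite -!catA IH. Qed.

Lemma stripes_pal k j t : palindrome (stripes k j t).
Proof.
apply/eqP; elim: t => [|t IH] /=; first exact: rev_nseq.
by rewrite !rev_cat !rev_nseq IH -catA stripes_rotate.
Qed.

Lemma stripes_prefix k j s t : s <= t -> prefix (stripes k j s) (stripes k j t).
Proof.
elim: t => [|t IH]; first by rewrite leqn0 => /eqP ->; exact: prefix_refl.
rewrite leq_eqVlt => /orP[/eqP ->|lt_st]; first exact: prefix_refl.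
by apply: prefix_trans (IH lt_st) _; rewrite /= -stripes_rotate prefix_prefix.
Qed.

Lemma stripes_cons k j t : 0 < k -> exists r, stripes k j t = true :: r.
Proof. by case: k => // k _; case: t => [|t] /=; eexists. Qed.

Lemma prefix_run_eq (b : bool) k k' (x y : bitseq) :
  prefix (nseq k b ++ ~~ b :: x) (nseq k' b ++ ~~ b :: y) -> k = k'.
Proof.
by elim: k k' => [|k IH] [|k'] //=; [case: b | case: b IH | rewrite eqxx => /IH ->].
Qed.

Lemma stripes_prefix_inj k j k' j' s s' :
  0 < k -> 0 < k' -> 0 < j -> 0 < j' -> 0 < s -> 0 < s' ->
  prefix (stripes k j s) (stripes k' j' s') -> k = k' /\ j = j'.
Proof.
case: s s' j j' => [|s] [|s'] [|j] [|j'] // k0 k0' _ _ _ _ /=.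
have [r ->] := stripes_cons j.+1 s k0; have [r' ->] := stripes_cons j'.+1 s' k0'.
move=> kj; have kk' := prefix_run_eq (b := true) kj; subst k'.
rewrite prefix_catr // eqxx /= in kj.
by rewrite (prefix_run_eq (b := false) kj).
Qed.

Lemma stripes_nil k j t : 0 < k -> stripes k j t != [::].
Proof. by move=> k0; rewrite -size_eq0 size_stripes -lt0n ltn_addr. Qed.

Lemma stripes_not1 k j t : 0 < k -> 0 < t -> stripes k j t != [:: true].
Proof.
move=> k0 t0; apply/eqP => /(congr1 size); rewrite size_stripes /=.
have := leq_mul t0 (leq_addl j k); lia.
Qed.

(* Codeword i < n is (1^k 0^j)^t 1^k with i = (j-1) sqrt n + (k-1) and t = sqrt n / 4; its
   proper prefixes (1^k 0^j)^s 1^k with 0 < s < t are palindromes, n (t-1) of them in all. *)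
Definition depth n := Nat.sqrt n %/ 4.
Definition ones n i := (i %% Nat.sqrt n).+1.
Definition zeros n i := (i %/ Nat.sqrt n).+1.
Definition witness_word n i s := stripes (ones n i) (zeros n i) s.
Definition witness_code n : {fset bitseq} :=
  [fset witness_word n i (depth n) | i in iota 0 n]%fset.
Definition witness_prefixes n : seq bitseq :=
  [seq witness_word n i s | i <- iota 0 n, s <- iota 1 (depth n).-1].

Lemma sqrt_bounds n : Nat.sqrt n * Nat.sqrt n <= n < (Nat.sqrt n).+1 * (Nat.sqrt n).+1.
Proof. have := PeanoNat.Nat.sqrt_spec' n; lia. Qed.

Lemma sqrt_ge16 n : 256 <= n -> 16 <= Nat.sqrt n.
Proof. by move=> n256; have := sqrt_bounds n; nia. Qed.

Lemma depth_ge4 n : 256 <= n -> 4 <= depth n.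
Proof. by move/sqrt_ge16; rewrite /depth; lia. Qed.

Lemma witness_prefix_inj n i i' s s' : 256 <= n -> 0 < s -> 0 < s' ->
  prefix (witness_word n i s) (witness_word n i' s') -> i = i'.
Proof.
move=> /sqrt_ge16 sqrt16 s0 s0' /stripes_prefix_inj[] // [ki] [ji].
by rewrite (divn_eq i (Nat.sqrt n)) (divn_eq i' (Nat.sqrt n)) ki ji.
Qed.

Lemma size_witness_word n i : 256 <= n -> i < n -> size (witness_word n i (depth n)) <= n.
Proof.
move=> /[dup] n256 /sqrt_ge16 + lt_in; rewrite size_stripes /ones /zeros /depth.
have := sqrt_bounds n; move: (Nat.sqrt n) => d /andP[d2n nd2] d16.
have k_le : (i %% d).+1 <= d by rewrite ltn_pmod //; lia.
have j_le : (i %/ d).+1 <= d + 3.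
  suff : i %/ d <= d + 2 by lia.
  have := leq_divM i d; move: (i %/ d) => q qd.
  by case: (leqP q (d + 2)) => // lt; have := leq_mul lt (leqnn d); nia.
have t_le : d %/ 4 * 4 <= d by rewrite leq_divM.
move: k_le j_le t_le; move: (i %% d).+1 (i %/ d).+1 (d %/ 4) => a b c; nia.
Qed.

Lemma inSS_witness_code n : 256 <= n -> inSS n (witness_code n).
Proof.
move=> n256; have t0 : 0 < depth n by have := depth_ge4 n256; lia.
have memW w : w \in witness_code n -> exists2 i, i < n & w = witness_word n i (depth n).
  by case/imfsetP=> i /=; rewrite mem_iota => /andP[_ lt_in] ->; exists i.
split; last first.
- by move=> _ /memW[i lt_in ->]; exact: size_witness_word.
- by apply/negP => /memW[i _ /eqP]; rewrite eq_sym (negbTE (stripes_not1 _ (ltn0Sn _) t0)).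
- apply: card_imfset_iota => i i' _ _ ii'.
  by apply: (witness_prefix_inj n256 t0 t0); rewrite ii' prefix_refl.
split=> [w /memW[i _ ->]|_ _ /memW[i _ ->] /memW[i' _ ->]].
  by split; [exact: stripes_pal | exact: stripes_nil].
apply/negP=> /andP[ii' ne].
by move: ne; rewrite (witness_prefix_inj n256 t0 t0 ii') eqxx.
Qed.

Lemma witness_prefixes_spec n : 256 <= n ->
  [/\ uniq (witness_prefixes n), size (witness_prefixes n) = n * (depth n).-1,
      (forall p, p \in witness_prefixes n -> exists2 c, c \in witness_code n & pprefix p c) &
      (forall p, p \in witness_prefixes n -> [/\ palindrome p, p != [::] & p != [:: true]])].
Proof.
move=> n256; have t4 := depth_ge4 n256.
split; last first.
- move=> _ /allpairsP[[i s] [_ /= + ->]]; rewrite mem_iota => /andP[s0 _].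
  by split; [exact: stripes_pal | exact: stripes_nil | exact: stripes_not1].
- move=> _ /allpairsP[[i s] [/= iI + ->]]; rewrite mem_iota => /andP[s0 lt_st].
  exists (witness_word n i (depth n)); first by apply/imfsetP; exists i.
  apply: prefix_pprefix; first by apply: stripes_prefix; lia.
  by rewrite !size_stripes ltn_add2l ltn_pmul2r //; lia.
- by rewrite size_allpairs !size_iota.
apply: allpairs_uniq; [exact: iota_uniq | exact: iota_uniq |].
move=> [i s] [i' s'] /allpairsP[[a b] [/= _ + [-> ->]]] /allpairsP[[a' b'] [/= _ + [-> ->]]].
rewrite !mem_iota => /andP[b0 _] /andP[b0' _] /= ab.
have aa' : a = a' by apply: (witness_prefix_inj n256 b0 b0'); rewrite ab prefix_refl.
subst a'; congr pair; move: ab => /(congr1 size) /eqP.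
by rewrite !size_stripes eqn_add2l eqn_pmul2r // => /eqP.
Qed.

Lemma cube_le_square n m : 256 <= n -> n * (depth n).-1 <= m -> n ^ 3 <= 64 * m ^ 2.
Proof.
move=> /[dup] n256 /sqrt_ge16 d16 le_m; have := sqrt_bounds n.
move: le_m; rewrite /depth; move: (Nat.sqrt n) d16 => d d16 le_m /andP[_ n_lt].
have d_eq := divn_eq d 4; have r_lt : d %% 4 < 4 by rewrite ltn_pmod.
move: d_eq r_lt le_m; move: (d %/ 4) (d %% 4) => t r d_eq r_lt le_m.
have n_le : n <= 64 * (t.-1 * t.-1) by nia.
have := leq_mul le_m le_m; rewrite !expnS expn0 !muln1; nia.
Qed.

Lemma witness_code_lower_bound n m (S : nat -> {fset bitseq}) :
  256 <= n -> good_seq n (witness_code n) m S -> n ^ 3 <= 64 * m ^ 2.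
Proof.
move=> n256 S_good; have [U_uniq U_size U_below U_pal] := witness_prefixes_spec n256.
apply: cube_le_square => //; rewrite -U_size.
exact: size_le_length (inSS_witness_code n256) S_good U_uniq U_below U_pal.
Qed.

(* The shortest palindromic prefix of [c] longer than [sig]; it exists when [c] is a
   palindrome longer than [sig]. *)
Definition child (sig c : bitseq) : bitseq :=
  let ks := iota (size sig).+1 (size c - size sig) in
  take (nth 0 ks (find (fun k => palindrome (take k c)) ks)) c.

Lemma child_spec sig c : pprefix sig c -> palindrome c ->
  [/\ prefix (child sig c) c, palindrome (child sig c), size sig < size (child sig c) &
      forall u, palindrome u -> prefix u c -> size sig < size u -> size (child sig c) <= size u].
Proof.
move=> /pprefix_size lt_sc pal_c; rewrite /child; set ks := iota _ _.
set a := fun k => palindrome (take k c).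
have has_ks : has a ks.
  apply/hasP; exists (size c); last by rewrite /a take_size.
  rewrite mem_iota; lia.
have lt_find : find a ks < size c - size sig by move: has_ks; rewrite has_find size_iota.
have nth_ks : nth 0 ks (find a ks) = (size sig).+1 + find a ks by rewrite nth_iota.
have size_take_ks : size (take (nth 0 ks (find a ks)) c) = nth 0 ks (find a ks).
  by rewrite size_takel // nth_ks; lia.
split; [exact: prefix_take | exact: (nth_find 0 has_ks) | by rewrite size_take_ks nth_ks; lia |].
move=> u pal_u uc lt_su; rewrite size_take_ks leqNgt; apply/negP => lt_u.
have lt_before : size u - (size sig).+1 < find a ks by rewrite nth_ks in lt_u; lia.
have := before_find 0 lt_before; rewrite /a nth_iota; last by lia.
rewrite subnKC //; move: uc; rewrite prefixE => /eqP ->.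
by rewrite pal_u.
Qed.

Lemma child_in_N n sig c : pprefix sig c -> palindrome c -> palindrome sig -> size c <= n ->
  inNn n sig (child sig c).
Proof.
move=> sig_c pal_c pal_sig szc; have [ch_c pal_ch lt_ch shortest] := child_spec sig_c pal_c.
have sig_ch : prefix sig (child sig c).
  exact: prefix_shorter (proj1 (andP sig_c)) ch_c (ltnW lt_ch).
split; last exact: leq_trans (size_prefix ch_c) szc.
split=> //; first exact: prefix_pprefix.
move=> u pal_u u_ch; rewrite leqNgt; apply/negP => lt_su.
have := shortest u pal_u (prefix_trans (proj1 (andP u_ch)) ch_c) lt_su.
by rewrite leqNgt pprefix_size.
Qed.

Section Refine.

Local Open Scope fset_scope.

Definition children (C : {fset bitseq}) (sig : bitseq) : {fset bitseq} :=
  [fset child sig c | c in [seq c <- enum_fset C | pprefix sig c]].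

Definition candidates (C S : {fset bitseq}) (sig : bitseq) : {fset bitseq} :=
  S `\ sig `|` children C sig.

Definition essential (C S : {fset bitseq}) (sig : bitseq) : {fset bitseq} :=
  [fset w in S `\ sig | extends_to C w] `|` children C sig.

Definition spare (C S : {fset bitseq}) (sig : bitseq) : {fset bitseq} :=
  S `\ sig `\` essential C S sig.

(* Padding with spare elements of [S] brings the size back to [n]. *)
Definition refine (n : nat) (C S : {fset bitseq}) (sig : bitseq) : {fset bitseq} :=
  essential C S sig `|`
  [fset w in take (n - #|` essential C S sig|) (enum_fset (spare C S sig))].

Lemma mem_children C sig w :
  w \in children C sig -> exists2 c, c \in C & pprefix sig c /\ w = child sig c.
Proof. by case/imfsetP=> c /=; rewrite mem_filter => /andP[sig_c cC] ->; exists c. Qed.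

Lemma child_children C sig c : c \in C -> pprefix sig c -> child sig c \in children C sig.
Proof. by move=> cC sig_c; apply/imfsetP; exists c; rewrite //= mem_filter sig_c. Qed.

Lemma essential_sub C S sig : essential C S sig `<=` candidates C S sig.
Proof.
apply/fsubsetP => w; rewrite !in_fsetU in_fset /= => /orP[/andP[wS _]|->]; last exact: orbT.
by rewrite wS.
Qed.

Lemma refine_sub n C S sig : refine n C S sig `<=` candidates C S sig.
Proof.
apply/fsubsetP => w; rewrite in_fsetU => /orP[|]; first exact/fsubsetP/essential_sub.
by rewrite in_fset => /mem_take; rewrite in_fsetD => /andP[_ wS]; rewrite in_fsetU wS.
Qed.

Variables (n : nat) (C S : {fset bitseq}) (sig c0 : bitseq).
Hypotheses (C_SS : inSS n C) (S_SS : inSS n S) (S_covers : forall c, c \in C -> covered S c).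
Hypotheses (sigS : sig \in S) (c0C : c0 \in C) (sig_c0 : pprefix sig c0).

Let acS : antichain S. Proof. by case: S_SS => -[]. Qed.

Let child_spec_in w : w \in children C sig -> exists2 c, c \in C &
  [/\ prefix w c, palindrome w, pprefix sig w &
      forall u, palindrome u -> prefix u c -> size sig < size u -> size w <= size u].
Proof.
move=> /mem_children[c cC [sig_c ->]]; exists c => //.
have [[pal_c _] _ _ _] := C_SS.
have [ch_c pal_ch lt_ch shortest] := child_spec sig_c (proj1 (pal_c c cC)).
split=> //; apply: (prefix_pprefix _ lt_ch).
exact: prefix_shorter (proj1 (andP sig_c)) ch_c (ltnW lt_ch).
Qed.

Lemma candidates_antichain : antichain (candidates C S sig).
Proof.
move=> u v; rewrite !in_fsetU !in_fsetD1.
case/orP=> [/andP[u_sig uS]|uCh]; case/orP=> [/andP[v_sig vS]|vCh]; first exact: acS.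
all: apply/negP => /[dup] /pprefix_size lt_uv /andP[uv _].
- have [c _ [_ _ /andP[sig_v _] _]] := child_spec_in vCh.
  case: (leqP (size u) (size sig)) => [le|/ltnW le].
    by move: u_sig; rewrite (antichain_prefix_eq acS uS sigS (prefix_shorter uv sig_v le)) eqxx.
  by move: u_sig; rewrite (antichain_prefix_eq acS sigS uS (prefix_shorter sig_v uv le)) eqxx.
- have [c _ [_ _ /andP[sig_u _] _]] := child_spec_in uCh.
  by move: v_sig; rewrite -(antichain_prefix_eq acS sigS vS (prefix_trans sig_u uv)) eqxx.
- have [c' _ [vc' _ _ shortest]] := child_spec_in vCh.
  have [_ _ [_ pal_u sig_u _]] := child_spec_in uCh.
  have := shortest u pal_u (prefix_trans uv vc') (pprefix_size sig_u).
  by rewrite leqNgt lt_uv.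
Qed.

Lemma card_essential : #|` essential C S sig| <= n.
Proof.
have [_ <- _ _] := C_SS.
apply: antichain_card (antichain_sub (essential_sub C S sig) candidates_antichain) _.
move=> w; rewrite in_fsetU in_fset /= => /orP[/andP[_ //]|/child_spec_in[c cC [wc _ _ _]]].
by apply/extends_toP; exists c.
Qed.

(* [child sig c0] is essential but not in [S], so at most |essential| - 1 essential words
   are taken from [S] minus [sig]. *)
Lemma card_spare : n - #|` essential C S sig| <= #|` spare C S sig|.
Proof.
have [_ cardS _ _] := S_SS; set ess := essential C S sig; set ch0 := child sig c0.
have ch0E : ch0 \in ess by rewrite in_fsetU child_children ?orbT.
have ch0S : ch0 \notin S.
  have [_ _ [_ _ sig_ch0 _]] := child_spec_in (child_children c0C sig_c0).
  by apply/negP => /(acS sigS)/negP.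
have card_rest : #|` S `\ sig| = n.-1.
  by have := cardfsD1 sig S; rewrite sigS cardS add1n => ->.
have card_common : #|` (S `\ sig) `&` ess| <= #|` ess| - 1.
  rewrite [X in _ <= X - 1](cardfsD1 ch0 ess) ch0E add1n subn1 /=.
  apply: fsubset_leq_card; apply/fsubsetP => x.
  rewrite in_fsetI in_fsetD1 => /andP[/andP[_ xS] xE].
  by rewrite in_fsetD1 xE andbT; apply: contraNneq ch0S => <-.
have ess0 : 0 < #|` ess| by rewrite cardfs_gt0; apply/fset0Pn; exists ch0.
have := card_essential; rewrite /spare cardfsD card_rest -/ess; lia.
Qed.

Lemma card_refine : #|` refine n C S sig| = n.
Proof.
rewrite /refine cardfsU card_fseq undup_id; last exact/take_uniq/fset_uniq.
rewrite size_takel ?card_spare //.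
have -> : essential C S sig `&`
    [fset w in take (n - #|` essential C S sig|) (enum_fset (spare C S sig))] = fset0.
  apply/fsetP => x; rewrite in_fsetI in_fset0; apply/negP => /andP[xE].
  rewrite in_fset => /mem_take.
  by rewrite in_fsetD xE.
by rewrite cardfs0 subn0 subnKC // card_essential.
Qed.

Lemma candidate_word w : w \in candidates C S sig ->
  [/\ palindrome w, w != [::], w != [:: true] & size w <= n].
Proof.
have [[palS _] _ S1 szS] := S_SS.
rewrite in_fsetU in_fsetD1 => /orP[/andP[_ wS]|/child_spec_in[c cC [wc pal_w lt_sw _]]].
  have [pal_w w0] := palS w wS; split=> //; last exact: szS.
  by apply: contraNneq S1 => <-.
have [_ _ _ szC] := C_SS; have [_] := palS sig sigS; rewrite -size_eq0 -lt0n => sig0.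
have /pprefix_size lt_sz := lt_sw.
split=> //; last exact: leq_trans (size_prefix wc) (szC c cC).
  by rewrite -size_eq0 -lt0n (leq_ltn_trans _ lt_sz).
by apply: contraTneq lt_sz => ->; rewrite -leqNgt.
Qed.

Lemma inSS_refine : inSS n (refine n C S sig).
Proof.
have sub := fsubsetP (refine_sub n C S sig).
split; [split | exact: card_refine | | by move=> w /sub/candidate_word[]].
- by move=> w /sub/candidate_word[].
- exact: antichain_sub (refine_sub n C S sig) candidates_antichain.
by apply/negP => /sub/candidate_word[_ _ /eqP].
Qed.

Lemma step_refine : step n S (refine n C S sig).
Proof.
exists sig => // w /(fsubsetP (refine_sub n C S sig)); rewrite in_fsetU in_fsetD1.
case/orP=> [/andP[w_sig wS]|/mem_children[c cC [sig_c ->]]]; first by split; [left|].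
have [[pal_c _] _ _ szC] := C_SS; have [[palS _] _ _ _] := S_SS.
have pal_c' := proj1 (pal_c c cC); have [_ _ lt _] := child_spec sig_c pal_c'.
split; first by right; apply: child_in_N sig_c pal_c' (proj1 (palS sig sigS)) (szC c cC).
by apply: contraTneq lt => ->; rewrite ltnn.
Qed.

Lemma refine_covers c : c \in C -> covered (refine n C S sig) c.
Proof.
move=> cC; have /coveredP[s sS sc] := S_covers cC; have [[pal_c acC] _ _ _] := C_SS.
have ess_refine w : w \in essential C S sig -> w \in refine n C S sig.
  by move=> wE; rewrite /refine in_fsetU wE.
apply/coveredP; case: (eqVneq s sig) => [s_sig|s_sig].
  rewrite s_sig in sc; have sig_c : pprefix sig c.
    rewrite /pprefix sc; apply/eqP => sig_eq.
    by move: (acC c c0 cC c0C); rewrite -sig_eq sig_c0.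
  exists (child sig c); first by apply: ess_refine; rewrite in_fsetU child_children ?orbT.
  by have [] := child_spec sig_c (proj1 (pal_c c cC)).
exists s => //; apply: ess_refine; rewrite in_fsetU in_fset !inE s_sig sS /=.
by apply/orP; left; apply/extends_toP; exists c.
Qed.

Lemma covered_refine p : covered (refine n C S sig) p -> covered S p.
Proof.
case/coveredP=> w /(fsubsetP (refine_sub n C S sig)); rewrite in_fsetU in_fsetD1.
case/orP=> [/andP[_ wS] wp|/child_spec_in[c _ [_ _ /andP[sig_w _] _]] wp]; apply/coveredP.
  by exists w.
by exists sig => //; exact: prefix_trans sig_w wp.
Qed.

Lemma refine_uncovers_sig : ~~ covered (refine n C S sig) sig.
Proof.
apply/coveredP => -[w /(fsubsetP (refine_sub n C S sig))]; rewrite in_fsetU in_fsetD1.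
case/orP=> [/andP[w_sig wS] w_sig'|/child_spec_in[c _ [_ _ /pprefix_size lt _]] /size_prefix].
  by move: w_sig; rewrite (antichain_prefix_eq acS wS sigS w_sig') eqxx.
by rewrite leqNgt lt.
Qed.

End Refine.

Definition potential (C S : {fset bitseq}) : nat :=
  \sum_(c <- enum_fset C)
    count (fun k => palindrome (take k c) && covered S (take k c)) (iota 0 (size c)).

Lemma sub_count_lt (T : eqType) (a1 a2 : pred T) (s : seq T) x :
  subpred a1 a2 -> x \in s -> a2 x -> ~~ a1 x -> count a1 s < count a2 s.
Proof.
move=> sub; elim: s => //= y s IH; rewrite inE => /orP[/eqP <-|xs] a2x a1x.
  by rewrite a2x (negbTE a1x) add0n add1n ltnS sub_count.
rewrite -addnS leq_add ?IH //.
by case: (a1 y) (sub y) => // ->.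
Qed.

Lemma potential_lt C S S' sig c0 :
  (forall p, covered S' p -> covered S p) -> ~~ covered S' sig ->
  sig \in S -> palindrome sig -> c0 \in C -> pprefix sig c0 -> potential C S' < potential C S.
Proof.
move=> S'S unc_sig sigS pal_sig c0C sig_c0.
have c0E : c0 \in enum_fset C by [].
rewrite /potential (big_rem c0 c0E) [X in _ < X](big_rem c0 c0E) /= -addSn.
have take_sig : take (size sig) c0 = sig by apply/eqP; rewrite -prefixE; case/andP: sig_c0.
apply: leq_add; last by apply: leq_sum => c _; apply: sub_count => k /andP[-> /S'S].
apply: (sub_count_lt (x := size sig)).
- by move=> k /andP[-> /S'S].
- by rewrite mem_iota add0n pprefix_size.
- by rewrite take_sig pal_sig; apply/coveredP; exists sig; rewrite ?prefix_refl.
- by rewrite take_sig (negbTE unc_sig) andbF.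
Qed.

Lemma potential_le_sum C S : sym_fixfree S -> potential C S <= sum_len_minus1 C.
Proof.
move=> fS; apply: leq_sum => -[|b c] _ //=.
rewrite (negbTE (covered_nil fS)) add0n subn1 /=.
by rewrite (leq_trans (count_size _ _)) ?size_iota.
Qed.

(* [good_seq] with an arbitrary starting code. *)
Definition chain n (C : {fset bitseq}) m (T : nat -> {fset bitseq}) : Prop :=
  [/\ T m = C, forall i, 0 < i <= m -> inSS n (T i),
      forall i, i < m -> step n (T i) (T i.+1) &
      forall i, i < m -> forall c, c \in C -> covered (T i) c].

Lemma chain_self n C : chain n C 0 (fun _ => C).
Proof. by split=> // i; rewrite ?ltn0 // => /andP[i0 /(leq_trans i0)]. Qed.

Lemma chain_cons n C m T S :
  inSS n (T 0) -> step n S (T 0) -> (forall c, c \in C -> covered S c) -> chain n C m T ->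
  chain n C m.+1 (fun i => if i is i'.+1 then T i' else S).
Proof.
move=> T0_SS stepS S_covers [Tm T_SS T_step T_covers]; split=> //.
- by case=> [|[|i]] //= lt_im; apply: T_SS.
- by case=> [|i] //= lt_im; apply: T_step.
- by case=> [|i] //= lt_im; apply: T_covers.
Qed.

Lemma covering_eq n C S : inSS n C -> inSS n S -> (forall c, c \in C -> covered S c) ->
  (forall s c, s \in S -> c \in C -> ~~ pprefix s c) -> S = C.
Proof.
move=> [_ cardC _ _] [_ cardS _ _] S_covers no_pp.
have CS : (C `<=` S)%fset.
  apply/fsubsetP => c cC; have /coveredP[s sS sc] := S_covers c cC.
  by have := no_pp s c sS cC; rewrite /pprefix sc /= negbK => /eqP <-.
by apply/esym/eqP; rewrite eqEfcard CS cardS cardC leqnn.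
Qed.

Lemma chain_from n C S : inSS n C -> inSS n S -> (forall c, c \in C -> covered S c) ->
  exists m T, [/\ m <= potential C S, T 0 = S & chain n C m T].
Proof.
move=> C_SS; have [k] := ubnP (potential C S); elim: k S => // k IH S lt_k S_SS S_covers.
case: (boolP (has (fun s => has (pprefix s) (enum_fset C)) (enum_fset S))); last first.
  move=> no_pp; exists 0, (fun _ => S); split=> //.
  rewrite (covering_eq C_SS S_SS S_covers) ?chain_self // => s c sS cC.
  by apply: contra no_pp => sc; apply/hasP; exists s => //; apply/hasP; exists c.
case/hasP=> sig sigS /hasP[c0 c0C sig_c0].
have S'_SS := inSS_refine C_SS S_SS sigS c0C sig_c0.
have [[pal_S _] _ _ _] := S_SS; have pal_sig := proj1 (pal_S sig sigS).
have lt_pot := potential_lt (covered_refine C_SS sigS) (refine_uncovers_sig C_SS S_SS sigS)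
  sigS pal_sig c0C sig_c0.
have [m [T [le_m T0 chT]]] :=
  IH _ (leq_trans lt_pot lt_k) S'_SS (refine_covers C_SS S_covers c0C sig_c0).
exists m.+1, (fun i => if i is i'.+1 then T i' else S); split=> //.
  exact: leq_ltn_trans le_m lt_pot.
by apply: chain_cons; rewrite ?T0 //; exact: step_refine C_SS S_SS sigS.
Qed.

Lemma upper_bound n C : inSS n C -> exists m S, m <= sum_len_minus1 C /\ good_seq n C m S.
Proof.
move=> C_SS; have [fR _ _ _] := inSS_R n.
have R_covers_C c : c \in C -> covered (R_code n) c.
  move=> cC; have [[palC _] _ C1 szC] := C_SS; have [pal_c c0] := palC c cC.
  by apply: R_covers (szC c cC) => //; apply: contraNneq C1 => <-.
have [m [T [le_m T0 [Tm T_SS T_step T_covers]]]] := chain_from C_SS (inSS_R n) R_covers_C.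
exists m, T; split; first exact: leq_trans le_m (potential_le_sum C fR).
by split=> // i lt_im c cC; apply/coveredP; apply: T_covers.
Qed.

Theorem theorem2 :
  (forall (n : nat) (C : {fset bitseq}), 1 <= n -> inSS n C ->
     exists m (S : nat -> {fset bitseq}),
       m <= sum_len_minus1 C /\ good_seq n C m S) /\
  (exists c N0 : nat, 0 < c /\
     forall n, N0 <= n ->
       exists B : {fset bitseq}, inSS n B /\
         forall m (S : nat -> {fset bitseq}), good_seq n B m S ->
           n ^ 3 <= c * m ^ 2).
Proof.
split=> [n C _|]; first exact: upper_bound.
exists 64, 256; split=> // n n256; exists (witness_code n).
split=> [|m S]; [exact: inSS_witness_code | exact: witness_code_lower_bound].
Qed.
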